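(* Let $b\ge1$ and $1\le a\le b$ be integers, and put $s=\tfrac{2a-1}{2}$. Let $V:\mathbb{C}^2\to\mathcal{H}_j$ be the encoding isometry of a spin code that is $(\mathsf{BD}_{2b},\delta_a)$-covariant, i.e. $D^j(g)V=V\delta_a(g)$ for all $g\in\mathsf{BD}_{2b}$, and let $|\bar0\rangle=V|0\rangle$, $|\bar1\rangle=V|1\rangle$. Then $\operatorname{supp}|\bar0\rangle\subset s+2b\mathbb{Z}$ and $\operatorname{supp}|\bar1\rangle=-\operatorname{supp}|\bar0\rangle$.
   Context: $\mathcal{H}_j$ is the spin-$j$ irrep of $\mathrm{SU}(2)$ with $J_z$-eigenbasis $|j,m\rangle$, $|m|\le j$, and $D^j(g)$ the action of $g$; in particular $D^j(\mathsf{Ph}(\alpha))|j,m\rangle=e^{-i\alpha m}|j,m\rangle$ and $D^j(\mathsf{X})|j,m\rangle=e^{-i\pi j}|j,-m\rangle$. For $|\psi\rangle=\sum_m\alpha_m|j,m\rangle$, $\operatorname{supp}|\psi\rangle=\{m:\alpha_m\ne0\}$. Here $\mathsf{X}=\begin{pmatrix}0&-i\\-i&0\end{pmatrix}$, $\mathsf{Z}=\begin{pmatrix}-i&0\\0&i\end{pmatrix}$, $\mathsf{Ph}(\alpha)=\mathrm{diag}(e^{-i\alpha/2},e^{i\alpha/2})$, and $\mathsf{BD}_{2b}=\langle\mathsf{X},\mathsf{Z},\mathsf{Ph}(\pi/b)\rangle$ (binary dihedral group of order $8b$). For $1\le a\le b$, $\delta_a$ is the two-dimensional irreducible representation of $\mathsf{BD}_{2b}$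 with $\delta_a(\mathsf{X})=\mathsf{X}$ and $\delta_a(\mathsf{Ph}(\pi/b))=\mathsf{Ph}(\pi/b)^{2a-1}$. *)

From mathcomp Require Import all_boot all_order all_algebra algC.
Set Implicit Arguments. Unset Strict Implicit. Unset Printing Implicit Defensive.
Import Order.TTheory GRing.Theory Num.Theory.
Local Open Scope ring_scope.

(* Spin j = n/2.  H_j = C^(n+1) with basis index k : 'I_(n+1), where basis
   vector k is |j, m> with m = j - k = (n - 2k)/2. *)
Definition mval (n : nat) (k : 'I_n.+1) : rat := (n%:Q - 2 * k%:Q) / 2.

(* D^j(g) for an arbitrary 2x2 matrix g, realized on Sym^(2j)(C^2):
   |j,m> = e1^(j+m) e2^(j-m) / sqrt((j+m)! (j-m)!), g e1 = g00 e1 + g10 e2,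
   g e2 = g01 e1 + g11 e2.  Entry (k', k) = <j,m_k'| D^j(g) |j,m_k>. *)
Definition Dj (n : nat) (g : 'M[algC]_2) : 'M[algC]_n.+1 :=
  \matrix_(k' < n.+1, k < n.+1)
    (sqrtC (((n - k')`! * k'`!)%N%:R) / sqrtC (((n - k)`! * k`!)%N%:R) *
     \sum_(u < (n - k).+1) \sum_(l < k.+1)
        (if (u + l == n - k')%N then
           'C(n - k, u)%:R * g 0 0 ^+ u * g 1 0 ^+ (n - k - u) *
           ('C(k, l)%:R * g 0 1 ^+ l * g 1 1 ^+ (k - l))
         else 0)).

Definition Xmx : 'M[algC]_2 := \matrix_(i < 2, j < 2) (if i == j then 0 else - 'i).
Definition Zmx : 'M[algC]_2 := \matrix_(i < 2, j < 2)
  (if i == j then (if i == 0 then - 'i else 'i) else 0).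
(* zeta = exp(i pi / (2b)), the principal (2b)-th root of -1 *)
Definition zeta (b : nat) : algC := (2 * b)%N.-root (-1).
Definition Phmx (b : nat) : 'M[algC]_2 := \matrix_(i < 2, j < 2)
  (if i == j then (if i == 0 then (zeta b)^-1 else zeta b) else 0).

Inductive gen := GX | GZ | GPh.

Definition genmx (b : nat) (x : gen) : 'M[algC]_2 :=
  match x with GX => Xmx | GZ => Zmx | GPh => Phmx b end.

(* Every element of BD_{2b} = <X, Z, Ph(pi/b)> (a finite group) is the product
   of a word in the generators. *)
Definition evalw (b : nat) (w : seq gen) : 'M[algC]_2 :=
  foldr (fun x M => genmx b x *m M) 1%:M w.

(* delta_a on generators: X |-> X, Ph(pi/b) |-> Ph(pi/b)^(2a-1), and hence
   Z = Ph(pi/b)^b |-> Ph(pi/b)^(b(2a-1)). *)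
Definition delta_gen (a b : nat) (x : gen) : 'M[algC]_2 :=
  match x with
  | GX => Xmx
  | GZ => Phmx b ^+ (b * (2 * a - 1))
  | GPh => Phmx b ^+ (2 * a - 1)
  end.

Definition delta_w (a b : nat) (w : seq gen) : 'M[algC]_2 :=
  foldr (fun x M => delta_gen a b x *m M) 1%:M w.

Definition supp (n : nat) (v : 'I_n.+1 -> algC) : rat -> Prop :=
  fun m => exists k : 'I_n.+1, v k != 0 /\ mval k = m.

From mathcomp Require Import all_boot all_order all_algebra algC cyclotomic.
From mathcomp Require Import ring lra zify.
Import Order.TTheory GRing.Theory Num.Theory.
Local Open Scope ring_scope.

(* D^j(Ph(pi/b)) multiplies |j,m> by zeta^(-2m), where zeta = exp(i pi/2b),
   while delta_a(Ph(pi/b)) multiplies |0> by zeta^(-(2a-1)); so a nonzero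
   coefficient of |0bar> at m forces zeta^(2m - (2a-1)) = 1, i.e.
   m in s + 2bZ, because zeta has order exactly 4b.  That order is computed by
   showing that the root of unity other than 1 with the largest real part is
   primitive, and that it must be the principal root zeta.  D^j(X) maps |j,m>
   to a multiple of |j,-m> and X swaps |0> and |1>, which gives the symmetry of
   the supports. *)

Lemma unity_root_norm {n} {y : algC} : (0 < n)%N -> y ^+ n = 1 -> `|y| = 1.
Proof.
move=> n_gt0 yn; apply/eqP; rewrite -(pexpr_eq1 n_gt0) ?normr_ge0 //.
by rewrite -normrX yn normr1.
Qed.

Lemma norm1_Re_Im (u : algC) : `|u| = 1 -> 'Re u ^+ 2 + 'Im u ^+ 2 = 1.
Proof. by move=> nu; rewrite -normC2_Re_Im nu expr1n. Qed.

Lemma conjC_unity_root {n} {r : algC} :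
  (0 < n)%N -> r ^+ n = 1 -> r^* = r ^+ n.-1.
Proof.
move=> n_gt0 rn; have r_ne0 : r != 0.
  by rewrite -normr_eq0 (unity_root_norm n_gt0 rn) oner_eq0.
apply: (mulfI r_ne0); rewrite -exprS prednK // rn.
by rewrite -normCK (unity_root_norm n_gt0 rn) expr1n.
Qed.

(* Rotating [u] clockwise by the angle of [r] moves it towards 1 as long as
   [u] lies in the upper half-plane at an angle at least that of [r]. *)
Lemma Re_lt_mul_conj {u r : algC} : `|u| = 1 -> `|r| = 1 -> 0 < 'Im r ->
  0 <= 'Im u -> 'Re u <= 'Re r -> 'Re u < 'Re (u * r^*).
Proof.
rewrite ReM Re_conj Im_conj mulrN opprK => /norm1_Re_Im nu /norm1_Re_Im nr.
move: nu nr (Creal_Re u) (Creal_Im u) (Creal_Re r) (Creal_Im r).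
move: ('Re u) ('Im u) ('Re r) ('Im r) => x y a b nu nr rx ry ra rb.
move=> b_gt0 y_ge0 le_xa.
rewrite -subr_gt0.
have a_lt1 : a < 1.
  rewrite real_ltNge ?real1 //; apply/negP => a_ge1.
  have : 1 <= a ^+ 2 by apply: exprn_ege1.
  rewrite -nr -{2}[a ^+ 2]addr0 lerD2l.
  by rewrite real_leNgt ?real0 ?rpredX // exprn_gt0.
have [x_ge0|x_lt0] := real_ge0P rx.
- have le_by : b <= y.
    rewrite -(ler_sqr (ltW b_gt0) y_ge0).
    have -> : b ^+ 2 = 1 - a ^+ 2 by rewrite -nr; ring.
    have -> : y ^+ 2 = 1 - x ^+ 2 by rewrite -nu; ring.
    by rewrite lerB // ler_sqr // qualifE /= (le_trans x_ge0).
  have -> : x * a + y * b - x =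
      (y - b) * b + (1 - a) * (1 + a - x) + (a ^+ 2 + b ^+ 2 - 1) by ring.
  rewrite nr subrr addr0 ltr_wpDl ?mulr_ge0 ?subr_ge0 ?(ltW b_gt0) //.
  rewrite mulr_gt0 ?subr_gt0 //.
  by rewrite (le_lt_trans le_xa) // ltrDr ltr01.
- have -> : x * a + y * b - x = x * (a - 1) + y * b by ring.
  by rewrite ltr_pwDl ?mulr_ge0 ?(ltW b_gt0) // nmulr_rgt0 // subr_lt0.
Qed.

(* The orbit of a primitive root [xi] under rotation by [r] contains 1: at a
   point of the orbit with maximal real part other than 1, one of the two
   rotations by [r] would increase the real part.  Hence [xi] is a power of
   [r]. *)
Lemma max_Re_unity_root_prim {n} {r : algC} : (0 < n)%N -> r ^+ n = 1 ->
  0 < 'Im r -> (forall y, y ^+ n = 1 -> y != 1 -> 'Re y <= 'Re r) ->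
  n.-primitive_root r.
Proof.
move=> n_gt0 rn Im_r_gt0 r_max.
have [xi xi_prim] := C_prim_root_exists n_gt0.
have nr := unity_root_norm n_gt0 rn.
have [k _ k_max] := @real_arg_maxP _ _ (Ordinal n_gt0) xpredT
  (fun k => 'Re (xi * r ^+ k)) isT (fun k _ => Creal_Re _).
set u := xi * r ^+ k in k_max.
have orbit_max j : 'Re (xi * r ^+ j) <= 'Re u.
  by rewrite -(expr_mod j rn); apply: (k_max (Ordinal (ltn_pmod j n_gt0))).
have un : u ^+ n = 1.
  by rewrite exprMn (prim_expr_order xi_prim) mul1r exprAC rn expr1n.
have nu := unity_root_norm n_gt0 un.
have u1 : u = 1.
  apply/eqP; apply: contraT => u_ne1; have le_ur := r_max u un u_ne1.
  have [Im_u_ge0|Im_u_lt0] := real_ge0P (Creal_Im u).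
    have := Re_lt_mul_conj nu nr Im_r_gt0 Im_u_ge0 le_ur.
    rewrite (conjC_unity_root n_gt0 rn) -mulrA -exprD.
    by move=> /lt_geF; rewrite orbit_max.
  have Im_uc_ge0 : 0 <= 'Im u^* by rewrite Im_conj oppr_ge0 ltW.
  have := @Re_lt_mul_conj u^* r; rewrite norm_conjC Re_conj.
  move=> /(_ nu nr Im_r_gt0 Im_uc_ge0 le_ur).
  rewrite -rmorphM Re_conj -mulrA -exprSr.
  by move=> /lt_geF; rewrite orbit_max.
have [m m_prim m_dvd] := prim_order_exists n_gt0 rn.
suff -> : n = m by [].
apply/eqP; rewrite eqn_dvd m_dvd andbT (prim_order_dvd xi_prim).
have : u ^+ m = 1 by rewrite u1 expr1n.
by rewrite exprMn exprAC (prim_expr_order m_prim) expr1n mulr1 => ->.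
Qed.

Lemma unity_root_max_Re_exists n : (1 < n)%N ->
  exists2 r : algC, [/\ r ^+ n = 1, r != 1 & 0 <= 'Im r] &
    forall y, y ^+ n = 1 -> y != 1 -> 'Re y <= 'Re r.
Proof.
move=> n_gt1; have [xi xi_prim] := C_prim_root_exists (ltnW n_gt1).
have [i i_ne0 i_max] := @real_arg_maxP _ _ (Ordinal n_gt1)
  (fun i => i != 0%N :> nat) (fun i => 'Re (xi ^+ i)) isT
  (fun i _ => Creal_Re _).
set r := xi ^+ i in i_max.
have r_max y : y ^+ n = 1 -> y != 1 -> 'Re y <= 'Re r.
  move=> yn; have [j ->] := prim_rootP xi_prim yn => xj_ne1.
  by apply: i_max; apply: contraNneq xj_ne1 => ->; rewrite expr0.
have rn : r ^+ n = 1 by rewrite exprAC (prim_expr_order xi_prim) expr1n.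
have r_ne1 : r != 1 by rewrite -(prim_order_dvd xi_prim) /dvdn modn_small.
have [Im_r_ge0|Im_r_lt0] := real_ge0P (Creal_Im r); first by exists r.
exists r^*; last by move=> y yn y_ne1; rewrite Re_conj; apply: r_max.
split; first by rewrite -rmorphXn rn rmorph1.
  by apply: contra r_ne1 => /eqP rc1; rewrite -[r]conjCK rc1 rmorph1.
by rewrite Im_conj oppr_ge0 ltW.
Qed.

Lemma zeta_expr {b} : (0 < b)%N -> zeta b ^+ (2 * b) = -1.
Proof. by move=> b_gt0; rewrite /zeta rootCK // muln_gt0. Qed.

Lemma Im_zeta_gt0 {b} : (0 < b)%N -> 0 < 'Im (zeta b).
Proof.
move=> b_gt0; rewrite lt_def Im_rootC_ge0 ?andbT; last by lia.
apply/eqP => /Creal_ImP z_real.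
have := zeta_expr b_gt0; rewrite mulnC exprM => zb2.
have := @real_exprn_even_ge0 _ 2 _ (rpredX b z_real) isT.
by rewrite zb2 oppr_ge0 ler10.
Qed.

Lemma zeta_prim {b} : (0 < b)%N -> (4 * b).-primitive_root (zeta b).
Proof.
move=> b_gt0; have b4_gt0 : (0 < 4 * b)%N by rewrite muln_gt0.
have Im_z_gt0 := Im_zeta_gt0 b_gt0.
have z4b : zeta b ^+ (4 * b) = 1.
  by rewrite -[4%N]/(2 * 2)%N -mulnA mulnC exprM zeta_expr // sqrrN expr1n.
have z_ne1 : zeta b != 1.
  by apply: contraTneq Im_z_gt0 => ->; rewrite (Creal_ImP _ _) ?rpred1 ?ltxx.
have [r [rn r_ne1 Im_r_ge0] r_max] :=
  @unity_root_max_Re_exists (4 * b) ltac:(lia).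
have le_zr := r_max _ z4b z_ne1.
have nr := unity_root_norm b4_gt0 rn; have nz := unity_root_norm b4_gt0 z4b.
(* [r] cannot be [-1]: its real part is at least that of [zeta b]. *)
have Im_r_gt0 : 0 < 'Im r.
  rewrite lt_def Im_r_ge0 andbT; apply/eqP => /Creal_ImP r_real.
  have : r ^+ 2 == 1 by rewrite -real_normK // nr expr1n.
  rewrite sqrf_eq1 (negbTE r_ne1) /= => /eqP r_eqN1.
  have : `|'Re (zeta b)| < 1.
    rewrite -nz (lt_leif (leif_normC_Re_Creal _)).
    by apply/Creal_ImP/eqP; rewrite gt_eqF.
  move=> /(real_ltrNnormlW (Creal_Re _)) /lt_le_trans /(_ le_zr).
  by rewrite (Creal_ReP _ r_real) r_eqN1 ltxx.
have r_prim := max_Re_unity_root_prim b4_gt0 rn Im_r_gt0 r_max.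
have r2b : r ^+ (2 * b) = -1.
  have : (r ^+ (2 * b)) ^+ 2 == 1 by rewrite -exprM mulnAC rn.
  rewrite sqrf_eq1 -(prim_order_dvd r_prim) => /orP[|/eqP //].
  by move=> /dvdn_leq; rewrite muln_gt0 b_gt0 => /(_ isT); rewrite leq_pmul2r.
have le_rz : 'Re r <= 'Re (zeta b) by apply: rootC_Re_max; rewrite ?muln_gt0.
suff -> : zeta b = r by [].
apply: eqC_semipolar; first by rewrite nz nr.
  by apply/eqP; rewrite eq_le le_zr le_rz.
by rewrite mulr_ge0 // ltW.
Qed.

Lemma sqrtC_fact_neq0 (p q : nat) : sqrtC ((p`! * q`!)%N%:R : algC) != 0.
Proof. by rewrite sqrtC_eq0 pnatr_eq0 muln_eq0 negb_or -!lt0n !fact_gt0. Qed.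

Lemma Dj_diagE n (g : 'M[algC]_2) (k' k : 'I_n.+1) :
  g 1 0 = 0 -> g 0 1 = 0 ->
  Dj n g k' k = if k' == k then g 0 0 ^+ (n - k) * g 1 1 ^+ k else 0.
Proof.
move=> g10 g01.
rewrite mxE (bigD1 ord_max) //= [X in _ + X]big1 ?addr0; last first.
  move=> u; rewrite -val_eqE /= => u_neq.
  apply: big1 => l _; case: ifP => // _.
  have u_lt : (0 < n - k - u)%N by have := ltn_ord u; lia.
  by rewrite g10 expr0n eqn0Ngt u_lt /= !(mulr0, mul0r).
rewrite (bigD1 ord0) //= [X in _ + X]big1 ?addr0; last first.
  move=> l; rewrite -val_eqE /= => l_neq0; case: ifP => // _.
  by rewrite g01 expr0n (negbTE l_neq0) /= !(mulr0, mul0r).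
rewrite subnn subn0 addn0 binn bin0 !expr0 !mulr1 !mul1r.
have [->|] := eqVneq k' k; first by rewrite eqxx divff ?mul1r ?sqrtC_fact_neq0.
rewrite -val_eqE /= => k_neq.
have /negbTE -> : (n - k != n - k')%N.
  apply: contra k_neq => /eqP eq_nk; apply/eqP.
  by have := ltn_ord k; have := ltn_ord k'; lia.
by rewrite mulr0.
Qed.

Lemma Dj_antidiagE n (g : 'M[algC]_2) (k' k : 'I_n.+1) :
  g 0 0 = 0 -> g 1 1 = 0 ->
  Dj n g k' k = if (k' + k == n)%N then g 1 0 ^+ (n - k) * g 0 1 ^+ k else 0.
Proof.
move=> g00 g11.
rewrite mxE (bigD1 ord0) //= [X in _ + X]big1 ?addr0; last first.
  move=> u; rewrite -val_eqE /= => u_neq0.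
  apply: big1 => l _; case: ifP => // _.
  by rewrite g00 expr0n (negbTE u_neq0) /= !(mulr0, mul0r).
rewrite (bigD1 ord_max) //= [X in _ + X]big1 ?addr0; last first.
  move=> l; rewrite -val_eqE /= => l_neq; case: ifP => // _.
  have l_lt : (0 < k - l)%N by have := ltn_ord l; lia.
  by rewrite g11 expr0n eqn0Ngt l_lt /= !(mulr0, mul0r).
rewrite subnn subn0 add0n binn bin0 !expr0 !mulr1 !mul1r.
have := ltn_ord k; have := ltn_ord k' => lt_k'n lt_kn.
have [k'k_n|/eqP k'k_neq] := eqVneq (k' + k)%N n.
  have -> : (k = n - k' :> nat)%N by lia.
  by rewrite eqxx subKn -1?ltnS // mulnC divff ?mul1r ?sqrtC_fact_neq0.
have /negbTE -> : (k != n - k' :> nat)%N by apply/eqP; lia.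
by rewrite mulr0.
Qed.

Lemma mulmx_Dj_diag n m (g : 'M[algC]_2) (A : 'M_(n.+1, m)) k j :
  g 1 0 = 0 -> g 0 1 = 0 ->
  (Dj n g *m A) k j = g 0 0 ^+ (n - k) * g 1 1 ^+ k * A k j.
Proof.
move=> g10 g01.
rewrite mxE (bigD1 k) //= big1 ?addr0 ?Dj_diagE ?eqxx // => i i_neq.
by rewrite Dj_diagE // eq_sym (negbTE i_neq) mul0r.
Qed.

Lemma mulmx_Dj_antidiag n m (g : 'M[algC]_2) (A : 'M_(n.+1, m)) k j :
  g 0 0 = 0 -> g 1 1 = 0 ->
  (Dj n g *m A) k j = g 1 0 ^+ k * g 0 1 ^+ (n - k) * A (rev_ord k) j.
Proof.
have := ltn_ord k => lt_kn g00 g11.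
rewrite mxE (bigD1 (rev_ord k)) //= big1 ?addr0 => [|i i_neq]; last first.
  rewrite Dj_antidiagE //; case: eqP => [k_i_n|]; last by rewrite mul0r.
  by case/eqP: i_neq; apply: val_inj => /=; lia.
rewrite Dj_antidiagE //= ifT; last by apply/eqP; lia.
by rewrite subSS subKn.
Qed.

Lemma ord2P (i : 'I_2) : i = 0 \/ i = 1.
Proof.
by case: i => [[|[|m]] lt_i2]; [left; apply: val_inj|right; apply: val_inj|].
Qed.

Lemma Phmx_exp b e : Phmx b ^+ e = \matrix_(i < 2, j < 2)
  (if i == j then (if i == 0 then (zeta b)^-1 ^+ e else zeta b ^+ e) else 0).
Proof.
elim: e => [|e IHe]; apply/matrixP => i j.
  by rewrite !mxE; case: (ord2P i) => ->; case: (ord2P j) => ->.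
rewrite exprS IHe -mulmxE !mxE !big_ord_recl !big_ord0 !mxE.
case: (ord2P i) => ->; case: (ord2P j) => -> /=;
  by rewrite ?exprS ?(mulr0, mul0r, addr0, add0r).
Qed.

Lemma mval_rev n (k : 'I_n.+1) : mval (rev_ord k) = - mval k.
Proof.
rewrite /mval; have -> : nat_of_ord (rev_ord k) = (n - k)%N by rewrite /= subSS.
by rewrite -subzn -1?ltnS // intrB; field.
Qed.

Lemma mval_eqmod n (k : 'I_n.+1) c d : (k + c = n - k %[mod 2 * d])%N ->
  exists z : int, mval k = c%:Q / 2 + d%:Q * z%:~R.
Proof.
move=> eq_mod; exists (((n - k) %/ (2 * d))%N%:Z - ((k + c) %/ (2 * d))%N%:Z).
have := divn_eq (n - k) (2 * d); have := divn_eq (k + c) (2 * d); rewrite eq_mod.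
move: ((n - k) %/ (2 * d))%N ((k + c) %/ (2 * d))%N => q1 q2 eq_kc eq_nk.
have /(congr1 (fun x : nat => x%:R : rat)) :
    (n + q2 * (2 * d) = 2 * k + c + q1 * (2 * d))%N.
  by have := ltn_ord k; lia.
rewrite /mval intrB -!pmulrn !natrD !natrM /=.
lra.
Qed.

Lemma supp_rev n (v w : 'I_n.+1 -> algC) :
  (forall k, (v (rev_ord k) != 0) = (w k != 0)) ->
  forall m, supp v m <-> supp w (- m).
Proof.
move=> vw m; split=> [[k [vk_neq0 <-]]|[k [wk_neq0 km]]].
  by exists (rev_ord k); rewrite -vw rev_ordK mval_rev.
by exists (rev_ord k); rewrite vw mval_rev km opprK.
Qed.

Lemma Ph_covariant_eqmod {n b e} {V : 'M[algC]_(n.+1, 2)} {k : 'I_n.+1} :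
  (0 < b)%N -> Dj n (Phmx b) *m V = V *m Phmx b ^+ e -> V k 0 != 0 ->
  (k + e = n - k %[mod 4 * b])%N.
Proof.
move=> b_gt0 /matrixP /(_ k 0) + Vk_neq0; rewrite mulmx_Dj_diag ?mxE //.
rewrite big_ord_recl big_ord1 Phmx_exp !mxE /= mulr0 addr0 [RHS]mulrC.
move=> /(mulIf Vk_neq0); rewrite !exprVn => E.
have z_prim := zeta_prim b_gt0.
have z_neq0 : zeta b != 0 by rewrite (prim_root_eq0 z_prim) muln_eq0 -lt0n b_gt0.
apply/eqP; rewrite -(eq_prim_root_expr z_prim) exprD; apply/eqP.
by rewrite -(mulVKf (expf_neq0 (n - k) z_neq0) (zeta b ^+ k)) E divfK ?expf_neq0.
Qed.

Lemma X_covariant_rev n (V : 'M[algC]_(n.+1, 2)) (k : 'I_n.+1) :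
  Dj n Xmx *m V = V *m Xmx -> (V (rev_ord k) 1 != 0) = (V k 0 != 0).
Proof.
move=> /matrixP /(_ k 1); rewrite mulmx_Dj_antidiag ?mxE //.
rewrite big_ord_recl big_ord1 !mxE /= mulr0 addr0 => /(congr1 (fun x => x != 0)).
rewrite !mulf_eq0 !negb_or !expf_eq0 oppr_eq0 (negbTE (neq0Ci _)).
by rewrite !andbF /= andbT.
Qed.

Theorem lemma1 (b a n : nat) (hb : (0 < b)%N) (ha : (0 < a)%N) (hab : (a <= b)%N)
  (V : 'M[algC]_(n.+1, 2))
  (hiso : (map_mx (fun z : algC => z^*) V)^T *m V = 1%:M)
  (hcov : forall w : seq gen, Dj n (evalw b w) *m V = V *m delta_w a b w) :
  (forall m : rat, supp (fun k => V k 0) m ->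
     exists z : int, m = ((2 * a)%N%:Q - 1) / 2 + (2 * b)%N%:Q * z%:~R) /\
  (forall m : rat, supp (fun k => V k 1) m <-> supp (fun k => V k 0) (- m)).
Proof.
have covPh : Dj n (Phmx b) *m V = V *m Phmx b ^+ (2 * a - 1).
  by have := hcov [:: GPh]; rewrite /evalw /delta_w /= !mulmx1.
have covX : Dj n Xmx *m V = V *m Xmx.
  by have := hcov [:: GX]; rewrite /evalw /delta_w /= !mulmx1.
split; last by apply: supp_rev => k; apply: X_covariant_rev.
move=> m [k [Vk_neq0 <-]].
have := Ph_covariant_eqmod hb covPh Vk_neq0; rewrite -[4%N]/(2 * 2)%N -mulnA.
move=> /mval_eqmod [z ->]; exists z.
by rewrite -subzn ?muln_gt0 // intrB.
Qed.
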